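(* Let $\mu:[0,1)\to(0,\infty)$ be decreasing and continuous with $\lim_{r\to1^-}\mu(r)=0$, and suppose there is $B>0$ with $\mu(1-d/2)\ge B\mu(1-d)$ for all $d\in(0,1]$. Suppose moreover that for every $q>1$ there exist $A(q)>1$ and $y_0$ such that for all $y>y_0$ and $x>qy$ one has $\mu(1-1/y)>A(q)\,\mu(1-1/x)$. Let $u(z)=\operatorname{Re}\sum_k a_{n_k}z^{n_k}$ be a Hadamard gap series ($n_k$ positive integers, $n_{k+1}\ge\lambda n_k$, $\lambda>1$). If $\sup_k n_k|a_{n_k}|\,\mu(1-1/n_k)<\infty$, then $u\in\mathcal{B}_\mu$.
   Context: The Bloch-type space $\mathcal{B}_\mu$ is the set of harmonic functions $u$ on the unit disk $\mathbb{D}$ with $\|u\|_{\mathcal{B}_\mu}=\sup_{z\in\mathbb{D}}\big(|u(0)|+\mu(|z|)\,|\nabla u(z)|\big)<\infty$. *)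

(* classical real numbers. Points of the unit disk are pairs
   (x,y) of reals, z = x + i y; complex numbers are encoded as pairs of reals. *)
From Stdlib Require Import Reals Lra.
Open Scope R_scope.

(* z^n for z = x + i y, as (Re, Im). *)
Fixpoint cpow (x y : R) (n : nat) : R * R :=
  match n with
  | O => (1, 0)
  | S m => let (p, q) := cpow x y m in (x * p - y * q, x * q + y * p)
  end.

(* Re (a * z^m) with a = ar + i ai. *)
Definition re_term (ar ai : R) (m : nat) (x y : R) : R :=
  let (p, q) := cpow x y m in ar * p - ai * q.

Definition in_disk (x y : R) : Prop := x * x + y * y < 1.

Definition partial_x (f fx : R -> R -> R) : Prop :=
  forall x y, in_disk x y -> derivable_pt_lim (fun t => f t y) x (fx x y).
Definition partial_y (f fy : R -> R -> R) : Prop :=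
  forall x y, in_disk x y -> derivable_pt_lim (fun t => f x t) y (fy x y).

Definition cont_disk (f : R -> R -> R) : Prop :=
  forall x y, in_disk x y -> forall eps, 0 < eps -> exists delta, 0 < delta /\
    forall x' y', (x' - x) * (x' - x) + (y' - y) * (y' - y) < delta * delta ->
      Rabs (f x' y' - f x y) < eps.

(* u belongs to the Bloch-type space B_mu: u is harmonic on the disk
   (C^2 with vanishing Laplacian) and
   sup_{z in D} ( |u(0)| + mu(|z|) |grad u(z)| ) < infinity. *)
Definition in_Bloch_mu (mu : R -> R) (u : R -> R -> R) : Prop :=
  exists ux uy uxx uxy uyx uyy : R -> R -> R,
    partial_x u ux /\ partial_y u uy /\
    partial_x ux uxx /\ partial_y ux uxy /\
    partial_x uy uyx /\ partial_y uy uyy /\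
    cont_disk u /\ cont_disk ux /\ cont_disk uy /\
    cont_disk uxx /\ cont_disk uxy /\ cont_disk uyx /\ cont_disk uyy /\
    (forall x y, in_disk x y -> uxx x y + uyy x y = 0) /\
    exists M, forall x y, in_disk x y ->
      Rabs (u 0 0) + mu (sqrt (x * x + y * y)) *
        sqrt (ux x y * ux x y + uy x y * uy x y) <= M.

From Stdlib Require Import Reals Lra Lia Psatz Arith Wf_nat.
From Coquelicot Require Import Coquelicot.
Open Scope R_scope.

(** Write u = Re sum_k c_k z^(n_k). A series sum_k c_k z^(e_k) whose moments
    sum_k |c_k| e_k^j rho^(e_k) converge for all rho < 1 and all j can be differentiated
    termwise twice; its real part is harmonic, and |grad| at z is at most
    sum_k e_k |c_k| |z|^(e_k - 1). For the gap series this majorant is at most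
    C sum_k r^(n_k - 1) / mu(1 - 1/n_k) with r = |z|, and the heart of the proof is the bound
    sum_k r^(n_k - 1) / mu(1 - 1/n_k) <= K / mu(r). Split the indices at the first k0 with
    n_k0 > 1/(1 - r). Below k0 the gap condition on mu iterated along the lacunary sequence
    makes mu(1 - 1/n_k) exceed mu(r) by a factor A^(k0 - 1 - k) (except for the finitely many
    n_k below the threshold y0 of that condition). Beyond k0 the doubling condition gives
    mu(r) <= B^-1 (n_k (1 - r))^beta mu(1 - 1/n_k), and the factor r^(n_k) turns this into a
    geometric decay lambda^-(k - k0). *)

Lemma ex_series_Rabs_le (a b : nat -> R) :
  (forall k, Rabs (a k) <= b k) -> ex_series b -> ex_series a.
Proof. exact (ex_series_le a b). Qed.

Lemma Series_Rabs_le (a b : nat -> R) :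
  (forall k, Rabs (a k) <= b k) -> ex_series b -> Rabs (Series a) <= Series b.
Proof.
  intros Hab Hb.
  assert (Habs : ex_series (fun k => Rabs (a k))).
  { apply (ex_series_Rabs_le _ b); auto. intro k. rewrite Rabs_Rabsolu. apply Hab. }
  eapply Rle_trans; [apply Series_Rabs, Habs|].
  apply Series_le; auto. intro k. split; [apply Rabs_pos | apply Hab].
Qed.

Lemma Series_nonneg (a : nat -> R) : (forall k, 0 <= a k) -> ex_series a -> 0 <= Series a.
Proof.
  intros Ha Hs. apply Rle_trans with (Series (fun k => 0 * a k)).
  - rewrite Series_scal_l. lra.
  - apply Series_le; auto. intro k. rewrite Rmult_0_l. split; [lra | auto].
Qed.

Lemma ex_series_Rmult_l (c : R) (a : nat -> R) : ex_series a -> ex_series (fun k => c * a k).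
Proof. exact (ex_series_scal_l c a). Qed.

Lemma ex_series_Rplus (a b : nat -> R) :
  ex_series a -> ex_series b -> ex_series (fun k => a k + b k).
Proof. exact (ex_series_plus a b). Qed.

Lemma ex_series_Rminus (a b : nat -> R) :
  ex_series a -> ex_series b -> ex_series (fun k => a k - b k).
Proof. exact (ex_series_minus a b). Qed.

Lemma Series_le_of_partial_sums (a : nat -> R) (M : R) :
  (forall k, 0 <= a k) -> (forall N, sum_f_R0 a N <= M) -> ex_series a /\ Series a <= M.
Proof.
  intros Ha HM.
  destruct (growing_cv (sum_f_R0 a)) as [l Hl].
  - intro N. simpl. specialize (Ha (S N)). lra.
  - exists M. intros s [N ->]. apply HM.
  - assert (Hs : is_series a l) by (apply is_series_Reals, Hl).
    split; [exists l; exact Hs|].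
    rewrite (is_series_unique a l Hs).
    apply Rle_cv_lim with (sum_f_R0 a) (fun _ => M); auto.
    intros eps Heps. exists 0%nat. intros. unfold Rdist. rewrite Rminus_diag, Rabs_R0. lra.
Qed.

Lemma pow_le_one x m : 0 <= x <= 1 -> x ^ m <= 1.
Proof. intros Hx. rewrite <- (pow1 m). apply pow_incr. exact Hx. Qed.

Lemma pow_sub_le_div rho m j : 0 < rho <= 1 -> rho ^ (m - j) <= rho ^ m / rho ^ j.
Proof.
  intros Hrho. assert (Hj : 0 < rho ^ j) by (apply pow_lt; lra).
  apply Rmult_le_reg_r with (rho ^ j); auto.
  unfold Rdiv. rewrite Rmult_assoc, Rinv_l, Rmult_1_r by lra. rewrite <- pow_add.
  destruct (le_lt_dec j m).
  - right. f_equal. lia.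
  - replace (m - j + j)%nat with (m + (j - m))%nat by lia. rewrite pow_add.
    assert (0 <= rho ^ m) by (apply pow_le; lra).
    assert (rho ^ (j - m) <= 1) by (apply pow_le_one; lra).
    nra.
Qed.

Lemma pow_unbounded x r : 1 < x -> exists m : nat, r < x ^ m.
Proof.
  intros Hx. destruct (Pow_x_infinity x ltac:(rewrite Rabs_pos_eq; lra) (r + 1)) as [m Hm].
  exists m. specialize (Hm m (le_n m)). rewrite Rabs_pos_eq in Hm by (apply pow_le; lra). lra.
Qed.

Lemma one_minus_inv_range y : 1 <= y -> 0 <= 1 - / y < 1.
Proof.
  intros H. assert (0 < / y) by (apply Rinv_0_lt_compat; lra).
  assert (/ y <= 1) by (rewrite <- Rinv_1; apply Rinv_le_contravar; lra). lra.
Qed.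

Lemma one_minus_inv_le y z : 1 <= y -> y <= z -> 1 - / y <= 1 - / z.
Proof. intros. assert (/ z <= / y) by (apply Rinv_le_contravar; lra). lra. Qed.

Lemma pow_pred_le_twice rho m : 1/2 <= rho -> rho ^ pred m <= 2 * rho ^ m.
Proof.
  intros H. destruct m; simpl; [lra|].
  assert (0 <= rho ^ m) by (apply pow_le; lra). nra.
Qed.

Lemma bernoulli_lower a p : 0 <= a <= 1 -> 1 - INR p * a <= (1 - a) ^ p.
Proof.
  intros Ha. induction p as [|p IH]; [simpl; lra|]. rewrite S_INR. simpl.
  assert (0 <= INR p) by apply pos_INR.
  assert (0 <= (1 - a) * ((1 - a) ^ p - (1 - INR p * a))) by (apply Rmult_le_pos; lra).
  assert (0 <= INR p * (a * a)) by (apply Rmult_le_pos; nra). nra.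
Qed.

Lemma one_plus_pow_mul_le a p : 0 <= a -> INR p * a <= 1 -> (1 + a) ^ p * (1 - INR p * a) <= 1.
Proof.
  intros Ha Hp. destruct p as [|p]; [simpl; lra|].
  assert (a <= 1).
  { rewrite S_INR in Hp. assert (0 <= INR p) by apply pos_INR. nra. }
  pose proof (bernoulli_lower a (S p) ltac:(lra)).
  assert (0 <= (1 + a) ^ S p) by (apply pow_le; lra).
  apply Rle_trans with ((1 + a) ^ S p * (1 - a) ^ S p); [apply Rmult_le_compat_l; auto|].
  rewrite <- Rpow_mult_distr. apply pow_le_one. nra.
Qed.

(* The ratio of consecutive terms is (1 + 1/j)^p (1 - d) <= 1 once j d > 2 p. *)
Lemma pow_mul_geom_le p d j : 0 < d <= 1 -> (INR j * d) ^ p * (1 - d) ^ j <= (2 * INR p + 1) ^ p.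
Proof.
  intros Hd. pose proof (pos_INR p) as Hp0.
  induction j as [|j IH].
  - rewrite Rmult_0_l, pow_O, Rmult_1_r.
    destruct p; [simpl; lra | rewrite pow_i by lia; apply pow_le; lra].
  - assert (Hq0 : 0 <= (1 - d) ^ S j) by (apply pow_le; lra).
    destruct (Rle_dec (INR (S j) * d) (2 * INR p + 1)) as [Hs | Hl].
    + assert (0 <= INR (S j) * d) by (apply Rmult_le_pos; [apply pos_INR | lra]).
      assert ((INR (S j) * d) ^ p <= (2 * INR p + 1) ^ p) by (apply pow_incr; lra).
      assert ((1 - d) ^ S j <= 1) by (apply pow_le_one; lra).
      assert (0 <= (INR (S j) * d) ^ p) by (apply pow_le; lra).
      apply Rle_trans with ((2 * INR p + 1) ^ p * 1); [apply Rmult_le_compat|]; lra.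
    + rewrite S_INR in Hl |- *. set (J := INR j) in *.
      assert (HJ0 : 0 < J) by nra.
      assert (Hp : INR p * / J <= d / 2).
      { apply Rmult_le_reg_r with J; auto. rewrite Rmult_assoc, Rinv_l by lra. lra. }
      assert (0 <= / J) by (left; apply Rinv_0_lt_compat; auto).
      pose proof (one_plus_pow_mul_le (/ J) p ltac:(auto) ltac:(lra)).
      assert (0 <= (1 + / J) ^ p) by (apply pow_le; lra).
      assert (Hratio : (1 + / J) ^ p * (1 - d) <= 1).
      { apply Rle_trans with ((1 + / J) ^ p * (1 - INR p * / J)); auto.
        apply Rmult_le_compat_l; auto. lra. }
      assert (0 <= (J * d) ^ p * (1 - d) ^ j) by (apply Rmult_le_pos; apply pow_le; nra).
      replace ((J + 1) * d) with (J * d * (1 + / J)) by (field; lra).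
      rewrite Rpow_mult_distr. simpl ((1 - d) ^ S j).
      replace ((J * d) ^ p * (1 + / J) ^ p * ((1 - d) * (1 - d) ^ j))
        with (((J * d) ^ p * (1 - d) ^ j) * ((1 + / J) ^ p * (1 - d))) by ring.
      apply Rle_trans with ((J * d) ^ p * (1 - d) ^ j); auto.
      rewrite <- (Rmult_1_r ((J * d) ^ p * (1 - d) ^ j)) at 2.
      apply Rmult_le_compat_l; auto.
Qed.

Lemma geom_partial_sum_le b M : 0 <= b < 1 -> sum_f_R0 (fun i => b ^ i) M <= / (1 - b).
Proof.
  intros Hb. pose proof (GP_finite b M).
  assert (0 <= b ^ (M + 1)) by (apply pow_le; lra).
  apply Rmult_le_reg_r with (1 - b); [lra|]. rewrite Rinv_l by lra. nra.
Qed.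

Lemma rev_geom_partial_sum_le a m : 0 <= a < 1 -> sum_f_R0 (fun k => a ^ (m - k)) m <= / (1 - a).
Proof.
  intros Ha. induction m as [|m IH].
  - simpl. apply Rmult_le_reg_r with (1 - a); [lra|]. rewrite Rinv_l by lra. lra.
  - rewrite tech5. replace (S m - S m)%nat with 0%nat by lia.
    rewrite (sum_eq _ (fun k => a ^ (m - k) * a)).
    + rewrite <- scal_sum. simpl pow.
      assert (/ (1 - a) = a * / (1 - a) + 1) as -> by (field; lra).
      assert (a * sum_f_R0 (fun k => a ^ (m - k)) m <= a * / (1 - a))
        by (apply Rmult_le_compat_l; lra).
      lra.
    + intros i Hi. replace (S m - i)%nat with (S (m - i)) by lia. simpl. ring.
Qed.

Lemma partial_sum_mono (f : nat -> R) M M' :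
  (forall k, 0 <= f k) -> (M <= M')%nat -> sum_f_R0 f M <= sum_f_R0 f M'.
Proof.
  intros H Hm. induction Hm as [|M' Hm IH]; [lra|]. simpl. specialize (H (S M')). lra.
Qed.

Lemma two_sided_geom_partial_sum_le a b C k0 M : 0 <= a < 1 -> 0 <= b < 1 -> 0 <= C ->
  sum_f_R0 (fun k => if (k <? k0)%nat then a ^ (k0 - 1 - k) else C * b ^ (k - k0)) M
  <= / (1 - a) + C / (1 - b).
Proof.
  intros Ha Hb HC.
  assert (Ha' : 0 < / (1 - a)) by (apply Rinv_0_lt_compat; lra).
  assert (Hb' : 0 <= C / (1 - b)) by (apply Rmult_le_pos; auto; left; apply Rinv_0_lt_compat; lra).
  assert (Hnn : forall k, 0 <= (if (k <? k0)%nat then a ^ (k0 - 1 - k) else C * b ^ (k - k0))).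
  { intro k. destruct (k <? k0)%nat; [|apply Rmult_le_pos; auto]; apply pow_le; lra. }
  assert (Hright : forall M', sum_f_R0 (fun i => C * b ^ i) M' <= C / (1 - b)).
  { intro M'. rewrite (sum_eq _ (fun i => b ^ i * C)) by (intros; ring).
    rewrite <- scal_sum. unfold Rdiv. apply Rmult_le_compat_l; auto.
    apply geom_partial_sum_le; auto. }
  destruct k0 as [|k1].
  - rewrite (sum_eq _ (fun i => C * b ^ i)); [pose proof (Hright M); lra|].
    intros i _. simpl. rewrite Nat.sub_0_r. reflexivity.
  - assert (Hleft : sum_f_R0 (fun k => if (k <? S k1)%nat then a ^ (S k1 - 1 - k)
                                       else C * b ^ (k - S k1)) k1 <= / (1 - a)).
    { rewrite (sum_eq _ (fun k => a ^ (k1 - k))); [apply rev_geom_partial_sum_le; auto|].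
      intros i Hi. assert ((i <? S k1)%nat = true) as -> by (apply Nat.ltb_lt; lia).
      f_equal. lia. }
    destruct (le_lt_dec M k1) as [HM | HM].
    + pose proof (partial_sum_mono _ M k1 Hnn HM). lra.
    + rewrite (tech2 _ k1 M HM).
      match goal with |- _ + sum_f_R0 ?g _ <= _ => rewrite (sum_eq g (fun i => C * b ^ i)) end;
        [pose proof (Hright (M - S k1)%nat); lra|].
      intros i _. assert ((S k1 + i <? S k1)%nat = false) as -> by (apply Nat.ltb_ge; lia).
      do 2 f_equal. lia.
Qed.

Lemma indicator_partial_sum_le K0 M :
  sum_f_R0 (fun k => if (k <? K0)%nat then 1 else 0) M <= INR K0.
Proof.
  enough (H : sum_f_R0 (fun k => if (k <? K0)%nat then 1 else 0) M <= INR (Nat.min (S M) K0))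
    by (eapply Rle_trans; [apply H | apply le_INR; lia]).
  induction M as [|M IH].
  - destruct K0 as [|K]; simpl; lra.
  - simpl sum_f_R0. destruct (Nat.ltb_spec (S M) K0).
    + rewrite Nat.min_l in IH |- * by lia. rewrite (S_INR (S M)). lra.
    + rewrite Nat.min_r in IH |- * by lia. lra.
Qed.

Lemma one_minus_inv_inv r : 1 - / / (1 - r) = r.
Proof. rewrite Rinv_inv. ring. Qed.

Lemma inv_one_minus_ge_1 r : 0 <= r < 1 -> 1 <= / (1 - r).
Proof. intros Hr. rewrite <- Rinv_1. apply Rinv_le_contravar; lra. Qed.

(** * Powers of complex numbers *)

Lemma cpow_Cpow x y m : cpow x y m = ((x, y) ^ m)%C.
Proof.
  induction m as [|m IH]; [reflexivity|].
  simpl. rewrite IH. destruct ((x, y) ^ m)%C. reflexivity.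
Qed.

Lemma re_term_Re ar ai m x y : re_term ar ai m x y = Re ((ar, ai) * (x, y) ^ m)%C.
Proof. unfold re_term. rewrite cpow_Cpow. destruct ((x, y) ^ m)%C. reflexivity. Qed.

Lemma Cmod_pair a b : Cmod (a, b) = sqrt (a * a + b * b).
Proof. unfold Cmod. simpl. f_equal. ring. Qed.

Lemma Cpow_sub_bound (z w : C) rho m : Cmod z <= rho -> Cmod w <= rho ->
  Cmod (w ^ m - z ^ m)%C <= INR m * rho ^ pred m * Cmod (w - z)%C.
Proof.
  intros Hz Hw. assert (Hrho : 0 <= rho) by (pose proof (Cmod_ge_0 z); lra).
  pose proof (Cmod_ge_0 (w - z)%C) as Hd.
  induction m as [|m IH].
  - simpl. replace (1 - 1)%C with (RtoC 0) by ring. rewrite Cmod_0. lra.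
  - replace (w ^ S m - z ^ S m)%C with (w * (w ^ m - z ^ m) + (w - z) * z ^ m)%C by (simpl; ring).
    eapply Rle_trans; [apply Cmod_triangle|]. rewrite !Cmod_mult, Cmod_pow.
    assert (Hzm : Cmod z ^ m <= rho ^ m) by (apply pow_incr; split; [apply Cmod_ge_0|auto]).
    assert (Hpred : rho * (INR m * rho ^ pred m) = INR m * rho ^ m)
      by (destruct m; simpl; ring).
    rewrite S_INR. simpl pred.
    apply Rle_trans with (rho * (INR m * rho ^ pred m * Cmod (w - z)) + rho ^ m * Cmod (w - z)).
    + apply Rplus_le_compat.
      * apply Rmult_le_compat; auto using Cmod_ge_0.
      * rewrite Rmult_comm. apply Rmult_le_compat_r; auto.
    + nra.
Qed.

Lemma Cpow_taylor_bound (z w : C) rho m : Cmod z <= rho -> Cmod w <= rho -> rho <= 1 ->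
  Cmod (w ^ m - z ^ m - INR m * (w - z) * z ^ pred m)%C
  <= INR m ^ 2 * rho ^ (m - 2) * Cmod (w - z)%C ^ 2.
Proof.
  intros Hz Hw Hrho1. assert (Hrho : 0 <= rho) by (pose proof (Cmod_ge_0 z); lra).
  pose proof (Cmod_ge_0 (w - z)%C) as Hd.
  induction m as [|m IH].
  - simpl. replace (1 - 1 - 0 * (w - z) * 1)%C with (RtoC 0) by ring. rewrite Cmod_0. lra.
  - destruct m as [|m].
    + replace (w ^ 1 - z ^ 1 - INR 1 * (w - z) * z ^ pred 1)%C with (RtoC 0) by (simpl; ring).
      rewrite Cmod_0. simpl. nra.
    + assert (E : (w ^ S (S m) - z ^ S (S m) - INR (S (S m)) * (w - z) * z ^ pred (S (S m)))%C
        = (w * (w ^ S m - z ^ S m - INR (S m) * (w - z) * z ^ pred (S m))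
           + INR (S m) * ((w - z) * (w - z)) * z ^ m)%C).
      { rewrite (S_INR (S m)), RtoC_plus. simpl pred. generalize (INR (S m)). intro a.
        change (w ^ S (S m))%C with (w * (w * w ^ m))%C.
        change (z ^ S (S m))%C with (z * (z * z ^ m))%C.
        change (w ^ S m)%C with (w * w ^ m)%C. change (z ^ S m)%C with (z * z ^ m)%C. ring. }
      rewrite E. eapply Rle_trans; [apply Cmod_triangle|].
      rewrite !Cmod_mult, Cmod_R, Cmod_pow, Rabs_right by (apply Rle_ge, pos_INR).
      assert (Hzm : Cmod z ^ m <= rho ^ m) by (apply pow_incr; split; [apply Cmod_ge_0|auto]).
      assert (Hstep : rho * rho ^ (S m - 2) <= rho ^ m).
      { destruct m; simpl; [lra|]. replace (m - 0)%nat with m by lia. lra. }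
      replace (S (S m) - 2)%nat with m by lia.
      pose proof (pos_INR (S m)) as Hm. rewrite (S_INR (S m)).
      set (a := INR (S m)) in *. set (h := Cmod (w - z)) in *.
      assert (0 <= rho ^ (S m - 2)) by (apply pow_le; lra).
      assert (0 <= Cmod z ^ m) by (apply pow_le, Cmod_ge_0).
      apply Rle_trans with (rho * (a ^ 2 * rho ^ (S m - 2) * h ^ 2) + a * (h * h) * rho ^ m).
      * apply Rplus_le_compat.
        -- apply Rmult_le_compat; auto using Cmod_ge_0.
        -- apply Rmult_le_compat_l; auto. apply Rmult_le_pos; nra.
      * assert (0 <= a ^ 2 * h ^ 2) by (apply Rmult_le_pos; apply pow2_ge_0).
        assert (a ^ 2 * h ^ 2 * (rho * rho ^ (S m - 2)) <= a ^ 2 * h ^ 2 * rho ^ m)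
          by (apply Rmult_le_compat_l; auto).
        assert (0 <= rho ^ m) by (apply pow_le; lra).
        assert (0 <= (a + 1) * (h ^ 2 * rho ^ m))
          by (apply Rmult_le_pos; [lra | apply Rmult_le_pos; [apply pow2_ge_0 | auto]]).
        nra.
Qed.

Lemma Re_mul_pow_bound (a z : C) rho m :
  Cmod z <= rho -> Rabs (Re (a * z ^ m)%C) <= Cmod a * rho ^ m.
Proof.
  intros Hz. eapply Rle_trans; [apply re_le_Cmod|].
  rewrite Cmod_mult, Cmod_pow. apply Rmult_le_compat_l; [apply Cmod_ge_0|].
  apply pow_incr. split; [apply Cmod_ge_0 | exact Hz].
Qed.

Lemma Re_taylor_term (a : C) m x y x' y' :
  Re (a * (x', y') ^ m)%C - Re (a * (x, y) ^ m)%C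
  - ((x' - x) * Re (INR m * a * (x, y) ^ pred m)%C
     + (y' - y) * Re (Ci * (INR m * a) * (x, y) ^ pred m)%C)
  = Re (a * ((x', y') ^ m - (x, y) ^ m - INR m * ((x', y') - (x, y)) * (x, y) ^ pred m))%C.
Proof.
  destruct a, ((x', y') ^ m)%C, ((x, y) ^ m)%C, ((x, y) ^ pred m)%C.
  unfold Re, Cmult, Cminus, Cplus, Copp, RtoC, Ci. simpl. ring.
Qed.

Lemma Re_diff_term (a : C) m x y x' y' :
  Re (a * (x', y') ^ m)%C - Re (a * (x, y) ^ m)%C = Re (a * ((x', y') ^ m - (x, y) ^ m))%C.
Proof.
  destruct a, ((x', y') ^ m)%C, ((x, y) ^ m)%C.
  unfold Re, Cmult, Cminus, Cplus, Copp. simpl. ring.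
Qed.

Lemma Cmod_Re_pair (b : C) : Cmod (Re b, Re (Ci * b)%C) = Cmod b.
Proof. destruct b. rewrite !Cmod_pair. unfold Cmod, Re, Cmult, Ci. simpl. f_equal. ring. Qed.

Lemma dot_le_Cmod a1 a2 b1 b2 : a1 * b1 + a2 * b2 <= Cmod (a1, a2) * Cmod (b1, b2).
Proof.
  rewrite !Cmod_pair, <- sqrt_mult by nra.
  apply Rsqr_incr_0_var; [|apply sqrt_pos].
  rewrite Rsqr_sqrt by nra. unfold Rsqr.
  pose proof (pow2_ge_0 (a1 * b2 - a2 * b1)). nra.
Qed.

Lemma Cmod_Series_pair_le (gx gy b : nat -> R) :
  ex_series gx -> ex_series gy -> ex_series b ->
  (forall k, Cmod (gx k, gy k) <= b k) -> Cmod (Series gx, Series gy) <= Series b.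
Proof.
  intros Hx Hy Hb Hk.
  set (s := Cmod (Series gx, Series gy)).
  assert (Hs0 : 0 <= s) by apply Cmod_ge_0.
  (* |S|^2 = sum_k <S, (gx k, gy k)> <= |S| sum_k b k, with S = (Series gx, Series gy) *)
  assert (Hss : s * s = Series (fun k => Series gx * gx k + Series gy * gy k)).
  { unfold s. rewrite Series_plus, !Series_scal_l by (apply ex_series_Rmult_l; auto).
    rewrite Cmod_pair, sqrt_sqrt by nra. ring. }
  assert (Hle : Rabs (Series (fun k => Series gx * gx k + Series gy * gy k)) <= s * Series b).
  { rewrite <- Series_scal_l. apply Series_Rabs_le; [|apply ex_series_Rmult_l; auto].
    intro k. apply Rabs_le. split.
    - pose proof (dot_le_Cmod (- Series gx) (- Series gy) (gx k) (gy k)).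
      replace (Cmod (- Series gx, - Series gy)) with s in H
        by (unfold s; rewrite !Cmod_pair; f_equal; ring).
      pose proof (Hk k). nra.
    - pose proof (dot_le_Cmod (Series gx) (Series gy) (gx k) (gy k)). fold s in H.
      pose proof (Hk k). nra. }
  pose proof (Rle_abs (Series (fun k => Series gx * gx k + Series gy * gy k))).
  assert (0 <= Series b).
  { apply Series_nonneg; auto.
    intro k. pose proof (Cmod_ge_0 (gx k, gy k)). pose proof (Hk k). lra. }
  nra.
Qed.

Lemma in_disk_Cmod x y : in_disk x y -> Cmod (x, y) < 1.
Proof. unfold in_disk. intros H. rewrite Cmod_pair, <- sqrt_1. apply sqrt_lt_1; nra. Qed.

Lemma Cmod_sub_pair x y x' y' :
  Cmod ((x', y') - (x, y))%C = sqrt ((x' - x) * (x' - x) + (y' - y) * (y' - y)).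
Proof. rewrite <- Cmod_pair. reflexivity. Qed.

Lemma Cmod_le_add_Cmod_sub (z w : C) : Cmod w <= Cmod z + Cmod (w - z)%C.
Proof. replace w with (z + (w - z))%C at 1 by ring. apply Cmod_triangle. Qed.

Lemma disk_local_radius x y : in_disk x y -> exists rho, 0 < rho < 1 /\ Cmod (x, y) < rho.
Proof.
  intros Hd. pose proof (in_disk_Cmod x y Hd). pose proof (Cmod_ge_0 (x, y)).
  exists ((1 + Cmod (x, y)) / 2). split; lra.
Qed.

Lemma derivable_pt_lim_of_quadratic_remainder (f : R -> R) x l K delta : 0 < delta ->
  (forall h, Rabs h < delta -> Rabs (f (x + h) - f x - h * l) <= K * h ^ 2) ->
  derivable_pt_lim f x l.
Proof.
  intros Hdelta Hf eps Heps.
  set (K' := Rabs K + 1).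
  assert (HK' : 0 < K') by (unfold K'; pose proof (Rabs_pos K); lra).
  assert (Hd : 0 < Rmin delta (eps / K'))
    by (apply Rmin_glb_lt; [lra | apply Rdiv_lt_0_compat; lra]).
  exists (mkposreal _ Hd). intros h Hh0 Hh. simpl in Hh.
  pose proof (Rmin_l delta (eps / K')). pose proof (Rmin_r delta (eps / K')).
  assert (Hah : 0 < Rabs h) by (apply Rabs_pos_lt; auto).
  replace ((f (x + h) - f x) / h - l) with ((f (x + h) - f x - h * l) / h) by (field; auto).
  unfold Rdiv. rewrite Rabs_mult, Rabs_inv.
  apply Rmult_lt_reg_r with (Rabs h); auto.
  rewrite Rmult_assoc, Rinv_l, Rmult_1_r by lra.
  eapply Rle_lt_trans; [apply Hf; lra|].
  rewrite <- (pow2_abs h).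
  assert (K <= K') by (unfold K'; pose proof (Rle_abs K); lra).
  assert (Rabs h * K' < eps).
  { apply Rmult_lt_reg_r with (/ K'); [apply Rinv_0_lt_compat; lra|].
    rewrite Rmult_assoc, Rinv_r, Rmult_1_r by lra. unfold Rdiv in *. lra. }
  nra.
Qed.

Lemma cont_disk_of_local_lipschitz (f : R -> R -> R) :
  (forall x y, in_disk x y -> exists delta L, 0 < delta /\ forall x' y',
     Cmod ((x', y') - (x, y))%C < delta ->
     Rabs (f x' y' - f x y) <= L * Cmod ((x', y') - (x, y))%C) ->
  cont_disk f.
Proof.
  intros Hf x y Hd eps Heps.
  destruct (Hf x y Hd) as [delta [L [Hdelta HL]]].
  set (L' := Rabs L + 1).
  assert (HL' : 0 < L') by (unfold L'; pose proof (Rabs_pos L); lra).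
  assert (Hpos : 0 < Rmin delta (eps / L'))
    by (apply Rmin_glb_lt; [lra | apply Rdiv_lt_0_compat; lra]).
  exists (Rmin delta (eps / L')). split; [exact Hpos|].
  intros x' y' Hxy.
  pose proof (Rmin_l delta (eps / L')). pose proof (Rmin_r delta (eps / L')).
  set (d := Cmod ((x', y') - (x, y))%C).
  assert (Hd0 : 0 <= d) by apply Cmod_ge_0.
  assert (Hdlt : d < Rmin delta (eps / L')).
  { unfold d. rewrite Cmod_sub_pair.
    rewrite <- (sqrt_square (Rmin delta (eps / L'))) by lra.
    apply sqrt_lt_1_alt. split; [|exact Hxy].
    pose proof (Rle_0_sqr (x' - x)). pose proof (Rle_0_sqr (y' - y)). unfold Rsqr in *. lra. }
  eapply Rle_lt_trans; [apply HL; fold d; lra|].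
  assert (L <= L') by (unfold L'; pose proof (Rle_abs L); lra).
  assert (d * L' < eps).
  { apply Rmult_lt_reg_r with (/ L'); [apply Rinv_0_lt_compat; lra|].
    rewrite Rmult_assoc, Rinv_r, Rmult_1_r by lra. unfold Rdiv in *. lra. }
  fold d. nra.
Qed.

(** * Real parts of power series *)

Definition re_series (c : nat -> C) (e : nat -> nat) (x y : R) : R :=
  Series (fun k => Re (c k * (x, y) ^ e k)%C).

Definition moments_summable (c : nat -> C) (e : nat -> nat) : Prop :=
  forall rho, 0 < rho < 1 -> forall j : nat,
    ex_series (fun k => Cmod (c k) * INR (e k) ^ j * rho ^ e k).

Definition deriv_exp (e : nat -> nat) (k : nat) : nat := pred (e k).

Definition deriv_coef_x (c : nat -> C) (e : nat -> nat) (k : nat) : C := (INR (e k) * c k)%C.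

(* d/dy Re (a z^m) = Re (i m a z^(m-1)) *)
Definition deriv_coef_y (c : nat -> C) (e : nat -> nat) (k : nat) : C :=
  (Ci * deriv_coef_x c e k)%C.

Lemma moment_nonneg (c : nat -> C) (e : nat -> nat) rho j k :
  0 <= rho -> 0 <= Cmod (c k) * INR (e k) ^ j * rho ^ e k.
Proof.
  intros Hrho. apply Rmult_le_pos; [apply Rmult_le_pos|].
  - apply Cmod_ge_0.
  - apply pow_le, pos_INR.
  - apply pow_le, Hrho.
Qed.

Lemma moments_summable_deriv (c c' : nat -> C) (e : nat -> nat) :
  (forall k, Cmod (c' k) = INR (e k) * Cmod (c k)) ->
  moments_summable c e -> moments_summable c' (deriv_exp e).
Proof.
  intros Hc Hm rho Hrho j.
  apply (ex_series_Rabs_le _ (fun k => Cmod (c k) * INR (e k) ^ S j * rho ^ e k * / rho)).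
  - intro k. rewrite Rabs_pos_eq by (apply moment_nonneg; lra).
    rewrite Hc. unfold deriv_exp.
    assert (Hpow : rho ^ pred (e k) <= rho ^ e k / rho ^ 1).
    { rewrite <- Nat.sub_1_r. apply pow_sub_le_div. lra. }
    assert (Hexp : INR (pred (e k)) ^ j <= INR (e k) ^ j)
      by (apply pow_incr; split; [apply pos_INR | apply le_INR; lia]).
    assert (0 <= INR (pred (e k)) ^ j) by (apply pow_le, pos_INR).
    assert (0 <= rho ^ pred (e k)) by (apply pow_le; lra).
    assert (0 <= INR (e k) * Cmod (c k)) by (apply Rmult_le_pos; [apply pos_INR | apply Cmod_ge_0]).
    simpl pow in Hpow |- *. rewrite Rmult_1_r in Hpow.
    replace (Cmod (c k) * (INR (e k) * INR (e k) ^ j) * rho ^ e k * / rho)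
      with (INR (e k) * Cmod (c k) * INR (e k) ^ j * (rho ^ e k / rho)) by (unfold Rdiv; ring).
    apply Rmult_le_compat; auto; [apply Rmult_le_pos; auto |].
    apply Rmult_le_compat_l; auto.
  - apply ex_series_scal_r. apply Hm. exact Hrho.
Qed.

Lemma moments_summable_deriv_x (c : nat -> C) (e : nat -> nat) :
  moments_summable c e -> moments_summable (deriv_coef_x c e) (deriv_exp e).
Proof.
  apply moments_summable_deriv. intro k. unfold deriv_coef_x.
  rewrite Cmod_mult, Cmod_R, Rabs_pos_eq by apply pos_INR. reflexivity.
Qed.

Lemma moments_summable_deriv_y (c : nat -> C) (e : nat -> nat) :
  moments_summable c e -> moments_summable (deriv_coef_y c e) (deriv_exp e).
Proof.
  apply moments_summable_deriv. intro k. unfold deriv_coef_y, deriv_coef_x.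
  rewrite !Cmod_mult, Cmod_Ci, Cmod_R, Rabs_pos_eq by apply pos_INR. ring.
Qed.

Lemma re_series_summable (c : nat -> C) (e : nat -> nat) (z : C) rho :
  moments_summable c e -> 0 < rho < 1 -> Cmod z <= rho ->
  ex_series (fun k => Re (c k * z ^ e k)%C).
Proof.
  intros Hm Hrho Hz. apply (ex_series_Rabs_le _ _) with (2 := Hm rho Hrho 0%nat).
  intro k. rewrite pow_O, Rmult_1_r. apply Re_mul_pow_bound, Hz.
Qed.

Lemma re_series_taylor (c : nat -> C) (e : nat -> nat) rho x y x' y' :
  moments_summable c e -> 0 < rho < 1 -> Cmod (x, y) <= rho -> Cmod (x', y') <= rho ->
  Rabs (re_series c e x' y' - re_series c e x y
        - ((x' - x) * re_series (deriv_coef_x c e) (deriv_exp e) x y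
           + (y' - y) * re_series (deriv_coef_y c e) (deriv_exp e) x y))
  <= Series (fun k => Cmod (c k) * INR (e k) ^ 2 * rho ^ e k)
     * (Cmod ((x', y') - (x, y))%C ^ 2 / rho ^ 2).
Proof.
  intros Hm Hrho Hz Hw. unfold re_series.
  pose proof (re_series_summable c e _ rho Hm Hrho Hw) as S1.
  pose proof (re_series_summable c e _ rho Hm Hrho Hz) as S2.
  pose proof (re_series_summable _ _ _ rho (moments_summable_deriv_x c e Hm) Hrho Hz) as S3.
  pose proof (re_series_summable _ _ _ rho (moments_summable_deriv_y c e Hm) Hrho Hz) as S4.
  rewrite <- !Series_scal_l, <- Series_plus, <- !Series_minus
    by auto using ex_series_Rmult_l, ex_series_Rplus, ex_series_Rminus.
  unfold deriv_coef_y, deriv_coef_x, deriv_exp.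
  rewrite (Series_ext _ _ (fun k => Re_taylor_term (c k) (e k) x y x' y')).
  rewrite <- Series_scal_r. apply Series_Rabs_le; [| apply ex_series_scal_r, Hm, Hrho].
  intro k. set (h := Cmod ((x', y') - (x, y))%C).
  eapply Rle_trans; [apply re_le_Cmod|]. rewrite Cmod_mult.
  pose proof (Cpow_taylor_bound (x, y) (x', y') rho (e k) Hz Hw ltac:(lra)) as Ht.
  pose proof (pow_sub_le_div rho (e k) 2 ltac:(lra)) as Hp.
  fold h in Ht.
  assert (0 <= Cmod (c k)) by apply Cmod_ge_0.
  assert (0 <= INR (e k) ^ 2 * h ^ 2) by (apply Rmult_le_pos; apply pow2_ge_0).
  apply Rle_trans with (Cmod (c k) * (INR (e k) ^ 2 * rho ^ (e k - 2) * h ^ 2)).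
  - apply Rmult_le_compat_l; auto.
  - replace (Cmod (c k) * INR (e k) ^ 2 * rho ^ e k * (h ^ 2 / rho ^ 2))
      with (Cmod (c k) * (INR (e k) ^ 2 * h ^ 2) * (rho ^ e k / rho ^ 2)) by (unfold Rdiv; ring).
    replace (Cmod (c k) * (INR (e k) ^ 2 * rho ^ (e k - 2) * h ^ 2))
      with (Cmod (c k) * (INR (e k) ^ 2 * h ^ 2) * rho ^ (e k - 2)) by ring.
    apply Rmult_le_compat_l; [apply Rmult_le_pos|]; auto.
Qed.

Lemma re_series_lipschitz (c : nat -> C) (e : nat -> nat) rho x y x' y' :
  moments_summable c e -> 0 < rho < 1 -> Cmod (x, y) <= rho -> Cmod (x', y') <= rho ->
  Rabs (re_series c e x' y' - re_series c e x y)
  <= Series (fun k => Cmod (c k) * INR (e k) ^ 1 * rho ^ e k) * (Cmod ((x', y') - (x, y))%C / rho).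
Proof.
  intros Hm Hrho Hz Hw. unfold re_series.
  rewrite <- Series_minus by (apply (re_series_summable c e _ rho); auto).
  rewrite (Series_ext _ _ (fun k => Re_diff_term (c k) (e k) x y x' y')).
  rewrite <- Series_scal_r. apply Series_Rabs_le; [| apply ex_series_scal_r, Hm, Hrho].
  intro k. set (h := Cmod ((x', y') - (x, y))%C).
  eapply Rle_trans; [apply re_le_Cmod|]. rewrite Cmod_mult.
  pose proof (Cpow_sub_bound (x, y) (x', y') rho (e k) Hz Hw) as Ht.
  pose proof (pow_sub_le_div rho (e k) 1 ltac:(lra)) as Hp. rewrite Nat.sub_1_r, pow_1 in Hp.
  fold h in Ht.
  assert (0 <= Cmod (c k)) by apply Cmod_ge_0.
  assert (0 <= INR (e k) * h) by (apply Rmult_le_pos; [apply pos_INR | apply Cmod_ge_0]).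
  apply Rle_trans with (Cmod (c k) * (INR (e k) * rho ^ pred (e k) * h)).
  - apply Rmult_le_compat_l; auto.
  - replace (Cmod (c k) * INR (e k) ^ 1 * rho ^ e k * (h / rho))
      with (Cmod (c k) * (INR (e k) * h) * (rho ^ e k / rho)) by (unfold Rdiv; ring).
    replace (Cmod (c k) * (INR (e k) * rho ^ pred (e k) * h))
      with (Cmod (c k) * (INR (e k) * h) * rho ^ pred (e k)) by ring.
    apply Rmult_le_compat_l; [apply Rmult_le_pos|]; auto.
Qed.

Lemma re_series_partial_x (c : nat -> C) (e : nat -> nat) :
  moments_summable c e ->
  partial_x (re_series c e) (re_series (deriv_coef_x c e) (deriv_exp e)).
Proof.
  intros Hm x y Hd. destruct (disk_local_radius x y Hd) as [rho [Hrho Hz]].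
  apply derivable_pt_lim_of_quadratic_remainder
    with (K := Series (fun k => Cmod (c k) * INR (e k) ^ 2 * rho ^ e k) / rho ^ 2)
         (delta := rho - Cmod (x, y)); [lra|].
  intros h Hh.
  assert (Hc : Cmod (Cminus (x + h, y) (x, y)) = Rabs h).
  { rewrite Cmod_sub_pair, <- sqrt_Rsqr_abs. unfold Rsqr. f_equal. ring. }
  assert (Hw : Cmod (x + h, y) <= rho)
    by (pose proof (Cmod_le_add_Cmod_sub (x, y) (x + h, y)); lra).
  pose proof (re_series_taylor c e rho x y (x + h) y Hm Hrho (Rlt_le _ _ Hz) Hw) as T.
  rewrite Hc, pow2_abs in T. replace (x + h - x) with h in T by ring.
  replace (y - y) with 0 in T by ring. rewrite Rmult_0_l, Rplus_0_r in T.
  eapply Rle_trans; [exact T | right; unfold Rdiv; ring].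
Qed.

Lemma re_series_partial_y (c : nat -> C) (e : nat -> nat) :
  moments_summable c e ->
  partial_y (re_series c e) (re_series (deriv_coef_y c e) (deriv_exp e)).
Proof.
  intros Hm x y Hd. destruct (disk_local_radius x y Hd) as [rho [Hrho Hz]].
  apply derivable_pt_lim_of_quadratic_remainder
    with (K := Series (fun k => Cmod (c k) * INR (e k) ^ 2 * rho ^ e k) / rho ^ 2)
         (delta := rho - Cmod (x, y)); [lra|].
  intros h Hh.
  assert (Hc : Cmod (Cminus (x, y + h) (x, y)) = Rabs h).
  { rewrite Cmod_sub_pair, <- sqrt_Rsqr_abs. unfold Rsqr. f_equal. ring. }
  assert (Hw : Cmod (x, y + h) <= rho)
    by (pose proof (Cmod_le_add_Cmod_sub (x, y) (x, y + h)); lra).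
  pose proof (re_series_taylor c e rho x y x (y + h) Hm Hrho (Rlt_le _ _ Hz) Hw) as T.
  rewrite Hc, pow2_abs in T. replace (y + h - y) with h in T by ring.
  replace (x - x) with 0 in T by ring. rewrite Rmult_0_l, Rplus_0_l in T.
  eapply Rle_trans; [exact T | right; unfold Rdiv; ring].
Qed.

Lemma re_series_cont_disk (c : nat -> C) (e : nat -> nat) :
  moments_summable c e -> cont_disk (re_series c e).
Proof.
  intros Hm. apply cont_disk_of_local_lipschitz. intros x y Hd.
  destruct (disk_local_radius x y Hd) as [rho [Hrho Hz]].
  exists (rho - Cmod (x, y)), (Series (fun k => Cmod (c k) * INR (e k) ^ 1 * rho ^ e k) / rho).
  split; [lra|]. intros x' y' Hxy.
  assert (Hw : Cmod (x', y') <= rho)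
    by (pose proof (Cmod_le_add_Cmod_sub (x, y) (x', y')); lra).
  eapply Rle_trans; [apply (re_series_lipschitz c e rho); auto; lra | right; unfold Rdiv; ring].
Qed.

Lemma re_series_harmonic (c : nat -> C) (e : nat -> nat) x y :
  moments_summable c e -> in_disk x y ->
  re_series (deriv_coef_x (deriv_coef_x c e) (deriv_exp e)) (deriv_exp (deriv_exp e)) x y
  + re_series (deriv_coef_y (deriv_coef_y c e) (deriv_exp e)) (deriv_exp (deriv_exp e)) x y = 0.
Proof.
  intros Hm Hd. destruct (disk_local_radius x y Hd) as [rho [Hrho Hz]].
  assert (Hxx := moments_summable_deriv_x _ _ (moments_summable_deriv_x c e Hm)).
  assert (Hyy := moments_summable_deriv_y _ _ (moments_summable_deriv_y c e Hm)).
  unfold re_series. rewrite <- Series_plus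
    by (apply (re_series_summable _ _ _ rho); auto; lra).
  transitivity (Series (fun _ : nat => 0 * 0));
    [| exact (eq_trans (Series_scal_l 0 (fun _ => 0)) (Rmult_0_l _))].
  apply Series_ext. intro k. unfold deriv_coef_y, deriv_coef_x.
  destruct (c k), ((x, y) ^ deriv_exp (deriv_exp e) k)%C.
  unfold Re, Cmult, Ci, RtoC. simpl. ring.
Qed.

Definition grad_majorant (c : nat -> C) (e : nat -> nat) (r : R) (k : nat) : R :=
  INR (e k) * Cmod (c k) * r ^ pred (e k).

Lemma grad_majorant_nonneg (c : nat -> C) (e : nat -> nat) r k :
  0 <= r -> 0 <= grad_majorant c e r k.
Proof.
  intros Hr. unfold grad_majorant. apply Rmult_le_pos; [apply Rmult_le_pos|].
  - apply pos_INR.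
  - apply Cmod_ge_0.
  - apply pow_le, Hr.
Qed.

Lemma re_series_gradient_bound (c : nat -> C) (e : nat -> nat) x y :
  moments_summable c e -> in_disk x y ->
  Cmod (re_series (deriv_coef_x c e) (deriv_exp e) x y,
        re_series (deriv_coef_y c e) (deriv_exp e) x y)
  <= Series (grad_majorant c e (Cmod (x, y))).
Proof.
  intros Hm Hd. destruct (disk_local_radius x y Hd) as [rho [Hrho Hz]].
  assert (Hx := moments_summable_deriv_x c e Hm).
  assert (Hy := moments_summable_deriv_y c e Hm).
  assert (Hcoef : forall k, Cmod (deriv_coef_x c e k) = INR (e k) * Cmod (c k)).
  { intro k. unfold deriv_coef_x. rewrite Cmod_mult, Cmod_R, Rabs_pos_eq by apply pos_INR.
    reflexivity. }
  apply Cmod_Series_pair_le.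
  - apply (re_series_summable _ _ _ rho); auto; lra.
  - apply (re_series_summable _ _ _ rho); auto; lra.
  - apply (ex_series_Rabs_le _ _) with (2 := Hx rho Hrho 0%nat). intro k.
    rewrite Rabs_pos_eq by apply grad_majorant_nonneg, Cmod_ge_0.
    rewrite pow_O, Rmult_1_r, Hcoef. unfold grad_majorant, deriv_exp.
    apply Rmult_le_compat_l; [apply Rmult_le_pos; [apply pos_INR | apply Cmod_ge_0]|].
    apply pow_incr. split; [apply Cmod_ge_0 | lra].
  - intro k. unfold deriv_coef_y.
    rewrite <- Cmult_assoc, Cmod_Re_pair, Cmod_mult, Cmod_pow, Hcoef. right. reflexivity.
Qed.

Lemma re_series_in_Bloch_mu (mu : R -> R) (c : nat -> C) (e : nat -> nat) :
  (forall r, 0 <= r < 1 -> 0 <= mu r) -> moments_summable c e ->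
  (exists M, forall x y, in_disk x y ->
     mu (Cmod (x, y)) * Series (grad_majorant c e (Cmod (x, y))) <= M) ->
  in_Bloch_mu mu (re_series c e).
Proof.
  intros Hmu Hm [M HM].
  assert (Hx := moments_summable_deriv_x c e Hm).
  assert (Hy := moments_summable_deriv_y c e Hm).
  exists (re_series (deriv_coef_x c e) (deriv_exp e)),
    (re_series (deriv_coef_y c e) (deriv_exp e)),
    (re_series (deriv_coef_x (deriv_coef_x c e) (deriv_exp e)) (deriv_exp (deriv_exp e))),
    (re_series (deriv_coef_y (deriv_coef_x c e) (deriv_exp e)) (deriv_exp (deriv_exp e))),
    (re_series (deriv_coef_x (deriv_coef_y c e) (deriv_exp e)) (deriv_exp (deriv_exp e))),
    (re_series (deriv_coef_y (deriv_coef_y c e) (deriv_exp e)) (deriv_exp (deriv_exp e))).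
  split; [apply re_series_partial_x; auto|].
  split; [apply re_series_partial_y; auto|].
  split; [apply re_series_partial_x; auto|].
  split; [apply re_series_partial_y; auto|].
  split; [apply re_series_partial_x; auto|].
  split; [apply re_series_partial_y; auto|].
  split; [apply re_series_cont_disk; auto|].
  split; [apply re_series_cont_disk; auto|].
  split; [apply re_series_cont_disk; auto|].
  split; [apply re_series_cont_disk, moments_summable_deriv_x; auto|].
  split; [apply re_series_cont_disk, moments_summable_deriv_y; auto|].
  split; [apply re_series_cont_disk, moments_summable_deriv_x; auto|].
  split; [apply re_series_cont_disk, moments_summable_deriv_y; auto|].
  split; [intros x y Hd; apply re_series_harmonic; auto|].
  exists (Rabs (re_series c e 0 0) + M). intros x y Hd.
  rewrite <- !Cmod_pair. apply Rplus_le_compat_l.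
  eapply Rle_trans; [| apply (HM x y Hd)].
  apply Rmult_le_compat_l; [apply Hmu; split; [apply Cmod_ge_0 | apply in_disk_Cmod, Hd]|].
  apply re_series_gradient_bound; auto.
Qed.

Lemma moments_summable_of_majorant (c : nat -> C) (e : nat -> nat) :
  (forall k, (0 < e k)%nat) ->
  (forall s, 1/2 <= s < 1 -> ex_series (grad_majorant c e s)) ->
  moments_summable c e.
Proof.
  intros He Hmaj rho Hrho j.
  (* With rho = (1 - d) s, pow_mul_geom_le bounds e^j rho^e by a multiple of s^e. *)
  set (s := (1 + rho) / 2). set (d := 1 - rho / s). set (P := (2 * INR j + 1) ^ j).
  assert (Hs : 1/2 <= s < 1) by (unfold s; lra).
  assert (Hrs : rho / s = 1 - d) by (unfold d; ring).
  assert (Hd : 0 < d <= 1).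
  { assert (0 < rho / s < 1); [|unfold d; lra].
    split; [apply Rdiv_lt_0_compat; lra|].
    apply Rmult_lt_reg_r with s; [lra|]. unfold Rdiv.
    rewrite Rmult_assoc, Rinv_l, Rmult_1_r, Rmult_1_l by lra. unfold s; lra. }
  assert (Hdj : 0 < d ^ j) by (apply pow_lt; lra).
  apply (ex_series_Rabs_le _ (fun k => P / d ^ j * grad_majorant c e s k)).
  2: apply ex_series_Rmult_l, Hmaj, Hs.
  intro k. unfold grad_majorant. rewrite Rabs_pos_eq by (apply moment_nonneg; lra).
  pose proof (pow_mul_geom_le j d (e k) Hd) as Hgeom. fold P in Hgeom.
  rewrite <- Hrs, Rpow_mult_distr in Hgeom.
  assert (Hsplit : rho ^ e k = (rho / s) ^ e k * s ^ e k)
    by (rewrite <- Rpow_mult_distr; f_equal; field; lra).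
  assert (Hspred : s ^ e k <= INR (e k) * s ^ pred (e k)).
  { pose proof (He k). destruct (e k) as [|m]; [lia|]. simpl pred.
    rewrite S_INR. simpl. pose proof (pos_INR m).
    assert (0 <= s ^ m) by (apply pow_le; lra). nra. }
  assert (0 <= (rho / s) ^ e k) by (apply pow_le, Rlt_le, Rdiv_lt_0_compat; lra).
  assert (0 <= s ^ e k) by (apply pow_le; lra).
  assert (0 <= INR (e k) ^ j) by (apply pow_le, pos_INR).
  assert (0 <= Cmod (c k)) by apply Cmod_ge_0.
  assert (Hkey : INR (e k) ^ j * rho ^ e k * d ^ j <= P * (INR (e k) * s ^ pred (e k))).
  { rewrite Hsplit.
    apply Rle_trans with (P * s ^ e k).
    - replace (INR (e k) ^ j * ((rho / s) ^ e k * s ^ e k) * d ^ j)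
        with (INR (e k) ^ j * d ^ j * (rho / s) ^ e k * s ^ e k) by ring.
      apply Rmult_le_compat_r; auto.
    - apply Rmult_le_compat_l; auto. unfold P. apply pow_le. pose proof (pos_INR j). lra. }
  replace (P / d ^ j * (INR (e k) * Cmod (c k) * s ^ pred (e k)))
    with (Cmod (c k) * (P * (INR (e k) * s ^ pred (e k)) / d ^ j)) by (field; lra).
  rewrite Rmult_assoc. apply Rmult_le_compat_l; auto.
  apply Rmult_le_reg_r with (d ^ j); auto.
  replace (P * (INR (e k) * s ^ pred (e k)) / d ^ j * d ^ j)
    with (P * (INR (e k) * s ^ pred (e k))) by (field; lra).
  exact Hkey.
Qed.

(** * The growth estimate for lacunary weights *)

Section GrowthEstimate.

Variable mu : R -> R.
Hypothesis mu_pos : forall r, 0 <= r < 1 -> 0 < mu r.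
Hypothesis mu_decr : forall r s, 0 <= r -> r <= s -> s < 1 -> mu s <= mu r.

Lemma mu_inv_pos t : 1 <= t -> 0 < mu (1 - / t).
Proof. intros Ht. apply mu_pos, one_minus_inv_range, Ht. Qed.

Lemma mu_inv_le t t' : 1 <= t -> t <= t' -> mu (1 - / t') <= mu (1 - / t).
Proof.
  intros Ht Htt'. apply mu_decr.
  - apply one_minus_inv_range; lra.
  - apply one_minus_inv_le; lra.
  - apply one_minus_inv_range; lra.
Qed.

Variable B : R.
Hypothesis HB : 0 < B.
Hypothesis mu_doubling : forall d, 0 < d <= 1 -> mu (1 - d / 2) >= B * mu (1 - d).

Lemma mu_doubling_inv N : 1 <= N -> B * mu (1 - / N) <= mu (1 - / (2 * N)).
Proof.
  intros HN. replace (1 - / (2 * N)) with (1 - / N / 2) by (field; lra).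
  apply Rge_le, mu_doubling. split.
  - apply Rinv_0_lt_compat. lra.
  - rewrite <- Rinv_1. apply Rinv_le_contravar; lra.
Qed.

Lemma doubling_const_le_1 : B <= 1.
Proof.
  pose proof (mu_doubling_inv 1 ltac:(lra)) as H.
  pose proof (mu_inv_le 1 (2 * 1) ltac:(lra) ltac:(lra)).
  pose proof (mu_inv_pos 1 ltac:(lra)). nra.
Qed.

Definition mu_poly_growth (beta : nat) : Prop :=
  forall N y, 1 <= N -> N <= y -> B * mu (1 - / N) <= (y / N) ^ beta * mu (1 - / y).

Lemma mu_doubling_iter beta : 1 <= 2 ^ beta * B ->
  forall m N y, 1 <= N -> N <= y -> y <= 2 ^ m * N ->
  B * mu (1 - / N) <= (y / N) ^ beta * mu (1 - / y).
Proof.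
  intros Hbeta m. induction m as [|m IH]; intros N y HN HNy Hy.
  - simpl in Hy. replace y with N by lra.
    replace (N / N) with 1 by (field; lra). rewrite pow1.
    pose proof (mu_inv_pos N HN). pose proof doubling_const_le_1. nra.
  - assert (Hratio : 1 <= (y / N) ^ beta).
    { apply pow_R1_Rle. apply Rmult_le_reg_r with N; [lra|].
      unfold Rdiv. rewrite Rmult_assoc, Rinv_l; lra. }
    pose proof (mu_inv_pos y ltac:(lra)).
    destruct (Rle_dec y (2 * N)) as [Hy2 | Hy2].
    + pose proof (mu_doubling_inv N HN). pose proof (mu_inv_le y (2 * N) ltac:(lra) Hy2). nra.
    + assert (IHy := IH N (y / 2) HN ltac:(lra) ltac:(simpl in Hy; lra)).
      pose proof (mu_doubling_inv (y / 2) ltac:(lra)) as Hd.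
      replace (2 * (y / 2)) with y in Hd by field.
      assert (E : (y / N) ^ beta = 2 ^ beta * (y / 2 / N) ^ beta)
        by (rewrite <- Rpow_mult_distr; f_equal; field; lra).
      rewrite E.
      assert (0 <= (y / 2 / N) ^ beta)
        by (apply pow_le, Rmult_le_pos; [lra | left; apply Rinv_0_lt_compat; lra]).
      pose proof (mu_inv_pos (y / 2) ltac:(lra)).
      assert (0 <= 2 ^ beta) by (apply pow_le; lra).
      apply Rle_trans with ((y / 2 / N) ^ beta * mu (1 - / (y / 2))); auto.
      apply Rle_trans with ((y / 2 / N) ^ beta * (2 ^ beta * B * mu (1 - / (y / 2)))).
      * apply Rmult_le_compat_l; auto. nra.
      * replace (2 ^ beta * (y / 2 / N) ^ beta * mu (1 - / y))
          with ((y / 2 / N) ^ beta * (2 ^ beta * mu (1 - / y))) by ring.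
        apply Rmult_le_compat_l; auto. rewrite Rmult_assoc.
        apply Rmult_le_compat_l; auto.
Qed.

Lemma mu_poly_growth_exists : exists beta, mu_poly_growth beta.
Proof.
  destruct (pow_unbounded 2 (/ B) ltac:(lra)) as [beta Hb]. exists beta.
  intros N y HN HNy. destruct (pow_unbounded 2 (y / N) ltac:(lra)) as [m Hm].
  apply (mu_doubling_iter beta) with m; auto.
  - apply Rmult_le_reg_r with (/ B); [apply Rinv_0_lt_compat; auto|].
    rewrite Rmult_assoc, Rinv_r, Rmult_1_l, Rmult_1_r; lra.
  - apply Rmult_le_reg_r with (/ N); [apply Rinv_0_lt_compat; lra|].
    rewrite Rmult_assoc, Rinv_r by lra. fold (y / N). lra.
Qed.

Definition large_exponent_const (beta : nat) : R := 2 * (2 * INR (S beta) + 1) ^ S beta / B.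

Lemma large_exponent_const_nonneg beta : 0 <= large_exponent_const beta.
Proof.
  unfold large_exponent_const. apply Rmult_le_pos; [|left; apply Rinv_0_lt_compat; lra].
  apply Rmult_le_pos; [lra | apply pow_le]. pose proof (pos_INR (S beta)). lra.
Qed.

Lemma mu_large_exponent_bound beta r m : mu_poly_growth beta -> 1/2 <= r < 1 ->
  / (1 - r) <= INR m ->
  r ^ pred m * mu r <= large_exponent_const beta / (INR m * (1 - r)) * mu (1 - / INR m).
Proof.
  intros Hgrowth Hr Hm.
  set (x := INR m * (1 - r)). set (P := (2 * INR (S beta) + 1) ^ S beta).
  assert (Hx : 1 <= x).
  { unfold x. apply Rmult_le_reg_r with (/ (1 - r)); [apply Rinv_0_lt_compat; lra|].
    rewrite Rmult_assoc, Rinv_r, Rmult_1_l, Rmult_1_r by lra. lra. }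
  pose proof (Hgrowth (/ (1 - r)) (INR m) (inv_one_minus_ge_1 r ltac:(lra)) Hm) as Hmu.
  rewrite one_minus_inv_inv in Hmu.
  replace (INR m / / (1 - r)) with x in Hmu by (unfold x; field; lra).
  pose proof (pow_mul_geom_le (S beta) (1 - r) m ltac:(lra)) as Hgeom.
  replace (1 - (1 - r)) with r in Hgeom by ring. fold x P in Hgeom.
  pose proof (pow_pred_le_twice r m ltac:(lra)) as Hpred.
  assert (Hmk : 0 < mu (1 - / INR m))
    by (apply mu_inv_pos; pose proof (inv_one_minus_ge_1 r ltac:(lra)); lra).
  assert (Hmr : 0 < mu r) by (apply mu_pos; lra).
  assert (0 <= r ^ m) by (apply pow_le; lra).
  assert (1 <= x ^ beta) by (apply pow_R1_Rle; lra).
  unfold large_exponent_const. fold P.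
  apply Rmult_le_reg_l with (B * x); [nra|].
  replace (B * x * (2 * P / B / x * mu (1 - / INR m))) with (2 * P * mu (1 - / INR m))
    by (field; lra).
  apply Rle_trans with (2 * x * r ^ m * (B * mu r)).
  { replace (B * x * (r ^ pred m * mu r)) with (x * (B * mu r) * r ^ pred m) by ring.
    replace (2 * x * r ^ m * (B * mu r)) with (x * (B * mu r) * (2 * r ^ m)) by ring.
    apply Rmult_le_compat_l; [apply Rmult_le_pos; [lra | apply Rmult_le_pos; lra] | exact Hpred]. }
  apply Rle_trans with (2 * x * r ^ m * (x ^ beta * mu (1 - / INR m))).
  { apply Rmult_le_compat_l; [apply Rmult_le_pos; [lra | auto] | exact Hmu]. }
  replace (2 * x * r ^ m * (x ^ beta * mu (1 - / INR m)))
    with (2 * mu (1 - / INR m) * (x ^ S beta * r ^ m)) by (simpl; ring).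
  nra.
Qed.

Lemma mu_gap_iter A y0 q lambda : 1 < q -> q < lambda -> 1 < A -> 1 <= y0 ->
  (forall y x, y0 < y -> q * y < x -> mu (1 - / y) > A * mu (1 - / x)) ->
  forall m y X, y0 < y -> lambda ^ m * y <= X -> A ^ m * mu (1 - / X) <= mu (1 - / y).
Proof.
  intros Hq Hql HA Hy0 Hgap m. induction m as [|m IH]; intros y X Hy HX.
  - simpl in *. rewrite Rmult_1_l. apply mu_inv_le; lra.
  - assert (IHy := IH (lambda * y) X ltac:(nra) ltac:(simpl in HX; lra)).
    pose proof (Hgap y (lambda * y) Hy ltac:(nra)).
    simpl. assert (0 < A ^ m) by (apply pow_lt; lra). nra.
Qed.

Variable n : nat -> nat.
Variable lambda : R.
Hypothesis Hlambda : 1 < lambda.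
Hypothesis n_pos : forall k, (0 < n k)%nat.
Hypothesis n_gap : forall k, INR (n (S k)) >= lambda * INR (n k).

Lemma lacunary_growth j k : lambda ^ j * INR (n k) <= INR (n (k + j)).
Proof.
  induction j as [|j IH]; [simpl; rewrite Nat.add_0_r; lra|].
  rewrite Nat.add_succ_r. pose proof (n_gap (k + j)%nat). simpl. nra.
Qed.

Lemma lacunary_exp_ge_1 k : 1 <= INR (n k).
Proof. apply (le_INR 1), n_pos. Qed.

Lemma lacunary_lower k : lambda ^ k <= INR (n k).
Proof.
  pose proof (lacunary_growth k 0) as H. pose proof (lacunary_exp_ge_1 0).
  assert (0 < lambda ^ k) by (apply pow_lt; lra). simpl in H. nra.
Qed.

Lemma term_bound_below r k : 0 <= r < 1 -> INR (n k) <= / (1 - r) ->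
  r ^ pred (n k) * mu r <= mu (1 - / INR (n k)).
Proof.
  intros Hr Hk.
  pose proof (mu_inv_le (INR (n k)) (/ (1 - r)) (lacunary_exp_ge_1 k) Hk) as Hmu.
  rewrite one_minus_inv_inv in Hmu.
  assert (0 <= r ^ pred (n k) <= 1) by (split; [apply pow_le | apply pow_le_one]; lra).
  pose proof (mu_pos r Hr). nra.
Qed.

Lemma term_bound_gap A y0 r k k0 : 1 < A -> 1 <= y0 ->
  (forall y x, y0 < y -> (1 + lambda) / 2 * y < x -> mu (1 - / y) > A * mu (1 - / x)) ->
  0 <= r < 1 -> y0 < INR (n k) -> (k < k0)%nat -> INR (n (k0 - 1)) <= / (1 - r) ->
  r ^ pred (n k) * mu r <= (/ A) ^ (k0 - 1 - k) * mu (1 - / INR (n k)).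
Proof.
  intros HA Hy0 Hgap Hr Hk Hkk0 Hk0.
  pose proof (lacunary_growth (k0 - 1 - k) k) as Hs.
  replace (k + (k0 - 1 - k))%nat with (k0 - 1)%nat in Hs by lia.
  pose proof (mu_gap_iter A y0 ((1 + lambda) / 2) lambda ltac:(lra) ltac:(lra) HA Hy0 Hgap
    (k0 - 1 - k) (INR (n k)) (/ (1 - r)) Hk ltac:(lra)) as Hiter.
  rewrite one_minus_inv_inv in Hiter.
  assert (E : (/ A) ^ (k0 - 1 - k) * A ^ (k0 - 1 - k) = 1)
    by (rewrite <- Rpow_mult_distr, Rinv_l, pow1; lra).
  assert (0 < (/ A) ^ (k0 - 1 - k)) by (apply pow_lt, Rinv_0_lt_compat; lra).
  assert (0 <= r ^ pred (n k) <= 1) by (split; [apply pow_le | apply pow_le_one]; lra).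
  pose proof (mu_pos r Hr).
  apply Rle_trans with (mu r); [nra|].
  apply Rle_trans with ((/ A) ^ (k0 - 1 - k) * (A ^ (k0 - 1 - k) * mu r)); [nra|].
  apply Rmult_le_compat_l; lra.
Qed.

Lemma term_bound_beyond beta r k k0 : mu_poly_growth beta -> 1/2 <= r < 1 ->
  / (1 - r) < INR (n k0) -> (k0 <= k)%nat ->
  r ^ pred (n k) * mu r
  <= large_exponent_const beta * (/ lambda) ^ (k - k0) * mu (1 - / INR (n k)).
Proof.
  intros Hgrowth Hr Hk0 Hk.
  pose proof (lacunary_growth (k - k0) k0) as Hs.
  replace (k0 + (k - k0))%nat with k in Hs by lia.
  assert (Hpl : 1 <= lambda ^ (k - k0)) by (apply pow_R1_Rle; lra).
  pose proof (lacunary_exp_ge_1 k0).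
  assert (HNk : / (1 - r) <= INR (n k)) by nra.
  eapply Rle_trans; [apply (mu_large_exponent_bound beta r (n k) Hgrowth Hr HNk)|].
  apply Rmult_le_compat_r; [apply Rlt_le, mu_inv_pos, lacunary_exp_ge_1|].
  unfold Rdiv. apply Rmult_le_compat_l.
  - apply large_exponent_const_nonneg.
  - rewrite pow_inv. apply Rinv_le_contravar; [apply pow_lt; lra|].
    assert (Hd : / (1 - r) * (1 - r) = 1) by (field; lra).
    assert (INR (n k0) * (1 - r) > 1) by nra.
    nra.
Qed.

Lemma lacunary_first_index_above N : exists k0,
  N < INR (n k0) /\ forall k, (k < k0)%nat -> INR (n k) <= N.
Proof.
  destruct (dec_inh_nat_subset_has_unique_least_element (fun k => N < INR (n k)))
    as [k0 [[Hk0 Hk0min] _]].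
  - intro k. destruct (Rlt_dec N (INR (n k))); auto.
  - destruct (pow_unbounded lambda N Hlambda) as [k Hk].
    exists k. pose proof (lacunary_lower k). lra.
  - exists k0. split; auto. intros k Hk. apply Rnot_lt_le. intro Hlt.
    specialize (Hk0min k Hlt). lia.
Qed.

Definition lacunary_weight (A CL : R) (K0 k0 k : nat) : R :=
  (if (k <? K0)%nat then 1 else 0)
  + (if (k <? k0)%nat then (/ A) ^ (k0 - 1 - k) else CL * (/ lambda) ^ (k - k0)).

Lemma lacunary_weight_partial_sum_le A CL K0 k0 M : 1 < A -> 0 <= CL ->
  sum_f_R0 (lacunary_weight A CL K0 k0) M <= INR K0 + (/ (1 - / A) + CL / (1 - / lambda)).
Proof.
  intros HA HCL. unfold lacunary_weight. rewrite sum_plus.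
  apply Rplus_le_compat; [apply indicator_partial_sum_le|].
  apply two_sided_geom_partial_sum_le; auto.
  - split; [left; apply Rinv_0_lt_compat; lra|]. rewrite <- Rinv_1. apply Rinv_lt_contravar; lra.
  - split; [left; apply Rinv_0_lt_compat; lra|]. rewrite <- Rinv_1. apply Rinv_lt_contravar; lra.
Qed.

Lemma lacunary_term_bound A y0 beta K0 r k0 k : 1 < A -> 1 <= y0 ->
  (forall y x, y0 < y -> (1 + lambda) / 2 * y < x -> mu (1 - / y) > A * mu (1 - / x)) ->
  mu_poly_growth beta -> y0 < lambda ^ K0 -> 1/2 <= r < 1 ->
  / (1 - r) < INR (n k0) -> (forall k, (k < k0)%nat -> INR (n k) <= / (1 - r)) ->
  r ^ pred (n k) * mu r
  <= lacunary_weight A (large_exponent_const beta) K0 k0 k * mu (1 - / INR (n k)).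
Proof.
  intros HA Hy0 Hgap Hgrowth HK0 Hr Hk0 Hbelow. unfold lacunary_weight.
  assert (Hmk : 0 < mu (1 - / INR (n k))) by apply mu_inv_pos, lacunary_exp_ge_1.
  destruct (Nat.ltb_spec k k0) as [Hk | Hk].
  - destruct (Rlt_dec y0 (INR (n k))) as [Hy | Hy].
    + pose proof (term_bound_gap A y0 r k k0 HA Hy0 Hgap ltac:(lra) Hy Hk
        (Hbelow (k0 - 1)%nat ltac:(lia))).
      destruct (k <? K0)%nat; nra.
    + assert (HkK0 : (k < K0)%nat).
      { destruct (Nat.lt_ge_cases k K0) as [|HK]; auto.
        pose proof (Rle_pow lambda K0 k ltac:(lra) HK). pose proof (lacunary_lower k). lra. }
      assert ((k <? K0)%nat = true) as -> by (apply Nat.ltb_lt; auto).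
      pose proof (term_bound_below r k ltac:(lra) (Hbelow k Hk)).
      assert (0 <= (/ A) ^ (k0 - 1 - k)) by (apply pow_le, Rlt_le, Rinv_0_lt_compat; lra).
      nra.
  - pose proof (term_bound_beyond beta r k k0 Hgrowth Hr Hk0 Hk).
    destruct (k <? K0)%nat; nra.
Qed.

Hypothesis mu_gap : forall q, 1 < q -> exists A y0, 1 < A /\ 1 <= y0 /\
  forall y x, y0 < y -> q * y < x -> mu (1 - / y) > A * mu (1 - / x).

Lemma lacunary_weighted_sum_bound : exists K, 0 <= K /\ forall r, 1/2 <= r < 1 -> forall M,
  sum_f_R0 (fun k => r ^ pred (n k) / mu (1 - / INR (n k))) M <= K / mu r.
Proof.
  destruct (mu_gap ((1 + lambda) / 2) ltac:(lra)) as [A [y0 [HA [Hy0 Hgap]]]].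
  destruct mu_poly_growth_exists as [beta Hgrowth].
  pose proof (large_exponent_const_nonneg beta) as HCL.
  set (CL := large_exponent_const beta) in *.
  destruct (pow_unbounded lambda y0 Hlambda) as [K0 HK0].
  exists (INR K0 + (/ (1 - / A) + CL / (1 - / lambda))). split.
  { assert (/ A < 1) by (rewrite <- Rinv_1; apply Rinv_lt_contravar; lra).
    assert (/ lambda < 1) by (rewrite <- Rinv_1; apply Rinv_lt_contravar; lra).
    pose proof (pos_INR K0). assert (0 < / (1 - / A)) by (apply Rinv_0_lt_compat; lra).
    assert (0 <= CL / (1 - / lambda))
      by (apply Rmult_le_pos; [lra | left; apply Rinv_0_lt_compat; lra]).
    lra. }
  intros r Hr M.
  destruct (lacunary_first_index_above (/ (1 - r))) as [k0 [Hk0 Hbelow]].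
  assert (Hmr : 0 < mu r) by (apply mu_pos; lra).
  apply Rle_trans with (sum_f_R0 (fun k => lacunary_weight A CL K0 k0 k * / mu r) M).
  - apply sum_Rle. intros k _.
    pose proof (lacunary_term_bound A y0 beta K0 r k0 k HA Hy0 Hgap Hgrowth HK0 Hr Hk0 Hbelow).
    assert (Hmk : 0 < mu (1 - / INR (n k))) by apply mu_inv_pos, lacunary_exp_ge_1.
    unfold Rdiv. apply Rmult_le_reg_r with (mu (1 - / INR (n k)) * mu r); [nra|].
    replace (r ^ pred (n k) * / mu (1 - / INR (n k)) * (mu (1 - / INR (n k)) * mu r))
      with (r ^ pred (n k) * mu r) by (field; lra).
    replace (lacunary_weight A CL K0 k0 k * / mu r * (mu (1 - / INR (n k)) * mu r))
      with (lacunary_weight A CL K0 k0 k * mu (1 - / INR (n k))) by (field; lra).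
    auto.
  - rewrite <- scal_sum, Rmult_comm. unfold Rdiv.
    apply Rmult_le_compat_r; [left; apply Rinv_0_lt_compat; auto|].
    apply lacunary_weight_partial_sum_le; auto.
Qed.

Lemma lacunary_majorant_summable (c : nat -> C) (Cc : R) :
  (forall k, INR (n k) * Cmod (c k) * mu (1 - / INR (n k)) <= Cc) ->
  exists K, 0 <= K /\ forall s, 1/2 <= s < 1 ->
    ex_series (grad_majorant c n s) /\ Series (grad_majorant c n s) <= K / mu s.
Proof.
  intros Hc. destruct lacunary_weighted_sum_bound as [K [HK0 HK]].
  assert (HC0 : 0 <= Cc).
  { eapply Rle_trans; [|apply (Hc 0%nat)].
    apply Rmult_le_pos; [apply Rmult_le_pos; [apply pos_INR | apply Cmod_ge_0]|].
    apply Rlt_le, mu_inv_pos, lacunary_exp_ge_1. }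
  exists (Cc * K). split; [apply Rmult_le_pos; auto|]. intros s Hs.
  apply Series_le_of_partial_sums; [intro k; apply grad_majorant_nonneg; lra|]. intro N.
  apply Rle_trans with (sum_f_R0 (fun k => s ^ pred (n k) / mu (1 - / INR (n k)) * Cc) N).
  - apply sum_Rle. intros k _. unfold grad_majorant.
    assert (Hmk : 0 < mu (1 - / INR (n k))) by apply mu_inv_pos, lacunary_exp_ge_1.
    assert (0 <= s ^ pred (n k)) by (apply pow_le; lra).
    apply Rmult_le_reg_r with (mu (1 - / INR (n k))); auto.
    replace (s ^ pred (n k) / mu (1 - / INR (n k)) * Cc * mu (1 - / INR (n k)))
      with (s ^ pred (n k) * Cc) by (field; lra).
    specialize (Hc k). nra.
  - rewrite <- scal_sum.
    replace (Cc * K / mu s) with (Cc * (K / mu s)) by (unfold Rdiv; ring).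
    apply Rmult_le_compat_l; auto.
Qed.

Lemma lacunary_majorant_bound (c : nat -> C) (Cc : R) :
  (forall k, INR (n k) * Cmod (c k) * mu (1 - / INR (n k)) <= Cc) ->
  exists M, forall r, 0 <= r < 1 ->
    ex_series (grad_majorant c n r) /\ mu r * Series (grad_majorant c n r) <= M.
Proof.
  intros Hc. destruct (lacunary_majorant_summable c Cc Hc) as [K [HK0 HK]].
  assert (Hm0 : 0 < mu (1/2)) by (apply mu_pos; lra).
  assert (Hm00 : mu (1/2) <= mu 0) by (apply mu_decr; lra).
  exists (K * (mu 0 / mu (1/2))). intros r Hr.
  set (s := Rmax r (1/2)).
  assert (Hs : 1/2 <= s < 1) by (split; [apply Rmax_r | apply Rmax_lub_lt; lra]).
  destruct (HK s Hs) as [Hexs Hles].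
  assert (Hrs : forall k, 0 <= grad_majorant c n r k <= grad_majorant c n s k).
  { intro k. split; [apply grad_majorant_nonneg; lra|]. unfold grad_majorant.
    apply Rmult_le_compat_l; [apply Rmult_le_pos; [apply pos_INR | apply Cmod_ge_0]|].
    apply pow_incr. split; [lra | apply Rmax_l]. }
  split.
  { apply (ex_series_Rabs_le _ (grad_majorant c n s)); auto.
    intro k. rewrite Rabs_pos_eq; apply Hrs. }
  assert (Hmr : 0 < mu r) by (apply mu_pos; lra).
  assert (Hms : 0 < mu s) by (apply mu_pos; lra).
  assert (Hratio : mu r / mu s <= mu 0 / mu (1/2)).
  { unfold s. destruct (Rle_dec (1/2) r).
    - rewrite Rmax_left by lra. unfold Rdiv. rewrite Rinv_r by lra.
      apply Rmult_le_reg_r with (mu (1/2)); auto. rewrite Rmult_assoc, Rinv_l; lra.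
    - rewrite Rmax_right by lra. unfold Rdiv.
      apply Rmult_le_compat_r; [left; apply Rinv_0_lt_compat; auto | apply mu_decr; lra]. }
  apply Rle_trans with (mu r * (K / mu s)).
  - apply Rmult_le_compat_l; [lra|].
    apply Rle_trans with (Series (grad_majorant c n s)); [apply Series_le; auto | exact Hles].
  - replace (mu r * (K / mu s)) with (K * (mu r / mu s)) by (field; lra).
    apply Rmult_le_compat_l; auto.
Qed.

End GrowthEstimate.

Theorem corollary7
  (mu : R -> R)
  (mu_pos : forall r, 0 <= r < 1 -> 0 < mu r)
  (mu_decr : forall r s, 0 <= r -> r <= s -> s < 1 -> mu s <= mu r)
  (mu_cont : forall r, 0 <= r < 1 -> forall eps, 0 < eps -> exists delta,
      0 < delta /\ forall s, 0 <= s < 1 -> Rabs (s - r) < delta ->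
        Rabs (mu s - mu r) < eps)
  (mu_lim : forall eps, 0 < eps -> exists delta, 0 < delta /\
      forall r, 1 - delta < r < 1 -> mu r < eps)
  (B : R) (HB : 0 < B)
  (mu_doubling : forall d, 0 < d <= 1 -> mu (1 - d / 2) >= B * mu (1 - d))
  (mu_gap : forall q, 1 < q -> exists A y0, 1 < A /\ 1 <= y0 /\
      forall y x, y0 < y -> q * y < x -> mu (1 - / y) > A * mu (1 - / x))
  (n : nat -> nat) (lambda : R) (Hlambda : 1 < lambda)
  (n_pos : forall k, (0 < n k)%nat)
  (n_gap : forall k, INR (n (S k)) >= lambda * INR (n k))
  (ar ai : nat -> R)
  (Hcoef : exists C, forall k,
      INR (n k) * sqrt (ar k * ar k + ai k * ai k) * mu (1 - / INR (n k)) <= C) :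
  exists u : R -> R -> R,
    (forall x y, in_disk x y ->
       infinite_sum (fun k => re_term (ar k) (ai k) (n k) x y) (u x y)) /\
    in_Bloch_mu mu u.
Proof.
  destruct Hcoef as [Cc Hc].
  set (c := fun k => (ar k, ai k) : C).
  assert (Hc' : forall k, INR (n k) * Cmod (c k) * mu (1 - / INR (n k)) <= Cc)
    by (intro k; unfold c; rewrite Cmod_pair; apply Hc).
  destruct (lacunary_majorant_bound mu mu_pos mu_decr B HB mu_doubling
              n lambda Hlambda n_pos n_gap mu_gap c Cc Hc') as [M HM].
  assert (Hm : moments_summable c n).
  { apply moments_summable_of_majorant; [exact n_pos|]. intros s Hs. apply HM. lra. }
  exists (re_series c n). split.
  - intros x y Hd. destruct (disk_local_radius x y Hd) as [rho [Hrho Hz]].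
    apply is_series_Reals.
    apply (is_series_ext (fun k => Re (c k * (x, y) ^ n k)%C)).
    + intro k. symmetry. apply re_term_Re.
    + apply Series_correct, (re_series_summable c n _ rho); auto; lra.
  - apply re_series_in_Bloch_mu; auto.
    + intros r Hr. apply Rlt_le, mu_pos, Hr.
    + exists M. intros x y Hd. apply HM. split; [apply Cmod_ge_0 | apply in_disk_Cmod, Hd].
Qed.
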